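(* Let $s\ge1$, $0<r_1<r_2<\cdots<r_s<1$ and $\varepsilon>0$. Then there is $n_0$ such that for every $n\ge n_0$ for which all $r_in$ are integers, there exist self-orthogonal additive codes $C_s\subseteq C_{s-1}\subseteq\cdots\subseteq C_1\subseteq\mathbb{F}_4^n$ with $|C_i|=2^{n-r_in}$ such that, for each $i$, every vector of $C_i^\perp\setminus C_i$ has weight at least $\left(H_4^{-1}\!\left(\frac{1-r_i}{2}\right)-\varepsilon\right)n$. That is, there are nested stabilizer quantum codes $Q_1\subseteq Q_2\subseteq\cdots\subseteq Q_s$ with parameters $[[n,r_in,\delta_in]]$ that simultaneously (asymptotically) meet the quantum Gilbert–Varshamov bound $\delta_i\ge H_4^{-1}\!\left(\frac{1-r_i}{2}\right)$.
   Context: $\mathbb{F}_4=\{0,1,\omega,\omega^2\}$, $\omega^2=\omega+1$, $\bar x=x^2$; trace inner product $\langle u,v\rangle=\sum_i(u_i\bar v_i+\bar u_iv_i)\in\mathbb{F}_2$ on $\mathbb{F}_4^n$; additive codes are $\mathbb{F}_2$-subspaces; $C^\perp$ is the trace dual; self-orthogonal means $C\subseteq C^\perp$; weight = number of nonzero coordinates. An $[[n,k,d]]$ stabilizer code is given by a self-orthogonal additive $C$ with $|C|=2^{n-k}$ such that every vector of $C^\perp\setminus C$ has weight $\ge d$. $H_4(x)=-x\log_4\frac x3-(1-x)\log_4(1-x)$, and $H_4^{-1}$ is the inverse of its restriction to $(0,3/4]$. *)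

From HB Require Import structures.
From mathcomp Require Import all_boot all_order all_algebra.
From mathcomp Require Import all_classical all_reals all_analysis.
Set Implicit Arguments. Unset Strict Implicit. Unset Printing Implicit Defensive.
Import Order.TTheory GRing.Theory Num.Theory.
Local Open Scope ring_scope.

(* F_4 = {a + b w : a, b in F_2}, with w^2 = w + 1.  The pair (a, b) stands
   for a + b*w.  Addition is the componentwise (zmodType) addition. *)
Definition F4 : finType := ('F_2 * 'F_2)%type.

(* (a + b w)(c + d w) = ac + (ad + bc) w + bd w^2 = (ac + bd) + (ad + bc + bd) w *)
Definition f4mul (x y : F4) : F4 :=
  (x.1 * y.1 + x.2 * y.2, x.1 * y.2 + x.2 * y.1 + x.2 * y.2).

Definition f4conj (x : F4) : F4 := f4mul x x.

(* trace inner product <u,v> = sum_i (u_i vbar_i + ubar_i v_i), an element of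
   F4 which lies in the prime field F_2 = {0, 1} *)
Definition tip n (u v : 'rV[F4]_n) : F4 :=
  \sum_(i < n) (f4mul (u 0 i) (f4conj (v 0 i)) + f4mul (f4conj (u 0 i)) (v 0 i)).

(* additive code: an F_2-subspace of F_4^n *)
Definition additive_code n (C : {set 'rV[F4]_n}) : Prop :=
  0 \in C /\ forall u v, u \in C -> v \in C -> u + v \in C.

Definition tdual n (C : {set 'rV[F4]_n}) : {set 'rV[F4]_n} :=
  [set v | [forall u in C, tip u v == 0]].

Definition self_orthogonal n (C : {set 'rV[F4]_n}) : Prop := C \subset tdual C.

Definition wt n (v : 'rV[F4]_n) : nat := #|[set i : 'I_n | v 0 i != 0]|.

Definition log4 {R : realType} (x : R) : R := ln x / ln 4.
Definition H4 {R : realType} (x : R) : R :=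
  - x * log4 (x / 3) - (1 - x) * log4 (1 - x).

(* inverse of the restriction of H4 to (0, 3/4] (H4 is injective there);
   the default value 0 is irrelevant on the range H4((0,3/4]) = (0,1]. *)
Definition H4inv {R : realType} (y : R) : R :=
  xget 0 [set x : R | 0 < x <= 3 / 4 /\ H4 x = y].

From HB Require Import structures.
From mathcomp Require Import all_boot all_order all_algebra.
From mathcomp Require Import mxabelem.
From mathcomp Require Import lra ring zify.
Import Order.TTheory GRing.Theory Num.Theory.
Local Open Scope ring_scope.

(* The chain is grown greedily from {0}: adjoining some g in X^perp \ X to a
   self-orthogonal additive code X doubles it and keeps it self-orthogonal, and
   C_i is the code of size 2^(n - r_i n) met on the way.  A word v in
   X^perp \ X survives in (X + g)^perp \ (X + g) only if g is orthogonal to v,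
   which holds for at most half of the candidates g.  So g can be chosen such
   that a potential does not increase, in which each word of X^perp \ X of
   weight < (d_i - eps) n, d_i = H_4^-1((1 - r_i)/2), counts 2^(t + M - m_i)
   at dimension t, where m_i = n - r_i n.  It starts below 2^M, hence no such
   word survives at dimension m_i.  That it starts below 2^M is a Chernoff
   bound on the weight enumerator of F_4^n, using
   ln 4 * H_4(d_i) = (1 - r_i) ln 2. *)

Set Implicit Arguments.
Unset Strict Implicit.
Unset Printing Implicit Defensive.

Lemma F2_cases (z : 'F_2) : z = 0 \/ z = 1.
Proof. by case: z => [[|[|//]]] ? /=; [left | right]; apply: val_inj. Qed.

Lemma F2_addxx (z : 'F_2) : z + z = 0.
Proof. by case: (F2_cases z) => ->; apply/eqP. Qed.

Lemma F4_addxx (x : F4) : x + x = 0.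
Proof. by case: x => a b; apply/eqP; rewrite xpair_eqE /= !F2_addxx !eqxx. Qed.

Lemma rV_F4_addxx n (v : 'rV[F4]_n) : v + v = 0.
Proof. by apply/rowP => i; rewrite !mxE F4_addxx. Qed.

Lemma rV_F4_addKr n (g x : 'rV[F4]_n) : g + x + x = g.
Proof. by rewrite -addrA rV_F4_addxx addr0. Qed.

(** * Trace form and trace duals *)

(* The trace form takes values in the prime field F_2 of F_4 = F_2 x F_2,
   where it is the standard symplectic form on F_2^(2n). *)
Definition symp n (u v : 'rV[F4]_n) : 'F_2 :=
  \sum_(i < n) ((u 0 i).1 * (v 0 i).2 + (u 0 i).2 * (v 0 i).1).

Lemma f4_trace_form (x y : F4) :
  f4mul x (f4conj y) + f4mul (f4conj x) y = (x.1 * y.2 + x.2 * y.1, 0).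
Proof.
case: x y => [a b] [c d].
by case: (F2_cases a) => ->; case: (F2_cases b) => ->;
   case: (F2_cases c) => ->; case: (F2_cases d) => ->; apply/eqP.
Qed.

Lemma tip_symp n (u v : 'rV[F4]_n) : tip u v = (symp u v, 0).
Proof.
rewrite /tip /symp; under eq_bigr do rewrite f4_trace_form.
apply: (big_rec2 (fun (x : F4) (y : 'F_2) => x = (y, 0))) => // i a b _ ->.
by apply/eqP; rewrite xpair_eqE /= addr0 !eqxx.
Qed.

Section Symplectic.
Variable n : nat.
Implicit Types u v : 'rV[F4]_n.

Lemma sympC u v : symp u v = symp v u.
Proof. by apply: eq_bigr => i _; rewrite addrC mulrC [X in _ + X]mulrC. Qed.

Lemma sympDl u u' v : symp (u + u') v = symp u v + symp u' v.
Proof. by rewrite /symp -big_split; apply: eq_bigr => i _; rewrite !mxE /=; ring. Qed.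

Lemma sympDr u v v' : symp u (v + v') = symp u v + symp u v'.
Proof. by rewrite sympC sympDl !(sympC u). Qed.

Lemma symp0r u : symp u 0 = 0.
Proof. by rewrite /symp big1 // => i _; rewrite !mxE /= !mulr0 addr0. Qed.

Lemma sympxx u : symp u u = 0.
Proof. by rewrite /symp big1 // => i _; rewrite mulrC F2_addxx. Qed.

Lemma tdualE (C : {set 'rV[F4]_n}) v :
  (v \in tdual C) = [forall u in C, symp u v == 0].
Proof.
by rewrite inE; apply: eq_forallb => u; rewrite tip_symp xpair_eqE eqxx andbT.
Qed.

Lemma tdualP (C : {set 'rV[F4]_n}) v :
  reflect (forall u, u \in C -> symp u v = 0) (v \in tdual C).
Proof.
by rewrite tdualE; apply: (iffP forall_inP) => H u /H; [move/eqP | move->].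
Qed.

End Symplectic.

Section TraceDualCard.
Variable n : nat.
Local Notation V := 'rV[F4]_n.

Definition coord2 (u : V) : 'rV['F_2]_(n + n) :=
  row_mx (\row_i (u 0 i).1) (\row_i (u 0 i).2).

Definition coord2_swap (u : V) : 'rV['F_2]_(n + n) :=
  row_mx (\row_i (u 0 i).2) (\row_i (u 0 i).1).

Definition of_coord2 (y : 'rV['F_2]_(n + n)) : V :=
  \row_i (lsubmx y 0 i, rsubmx y 0 i).

Lemma coord2K : cancel coord2 of_coord2.
Proof.
move=> u; apply/rowP => i; rewrite /of_coord2 mxE row_mxKl row_mxKr !mxE.
by case: (u 0 i).
Qed.

Lemma of_coord2K : cancel of_coord2 coord2.
Proof.
by move=> y; rewrite /coord2 -[RHS]hsubmxK; congr row_mx; apply/rowP => i; rewrite !mxE.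
Qed.

Lemma coord2_swap_inj : injective coord2_swap.
Proof.
move=> u u' /eq_row_mx [/rowP h2 /rowP h1]; apply/rowP => i.
by move: (h1 i) (h2 i); rewrite !mxE; case: (u 0 i); case: (u' 0 i) => /= ? ? ? ? -> ->.
Qed.

Lemma coord2_swap_is_additive : {morph coord2_swap : u u' / u + u'}.
Proof.
move=> u u'; rewrite /coord2_swap add_row_mx.
by congr row_mx; apply/rowP => i; rewrite !mxE.
Qed.

Lemma coord2_swap0 : coord2_swap 0 = 0.
Proof.
by rewrite /coord2_swap -row_mx0; congr row_mx; apply/rowP => i; rewrite !mxE.
Qed.

Lemma symp_coord2 u v : symp u v = \sum_k coord2_swap u 0 k * coord2 v 0 k.
Proof.
rewrite /symp big_split_ord /= addrC big_split /=.
by congr (_ + _); apply: eq_bigr => i _; rewrite ?row_mxEl ?row_mxEr !mxE.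
Qed.

Variable D : {set V}.
Hypothesis addD : additive_code D.

Let D0 : 0 \in D. Proof. by case: addD. Qed.

(* The trace dual of D is, in coordinates, the kernel of the transpose of the
   matrix whose rows are the swapped coordinates of the words of D. *)
Definition code_mx : 'M['F_2]_(#|D|, n + n) :=
  \matrix_(j < #|D|) coord2_swap (enum_val j).

Lemma tdual_kermx v : (v \in tdual D) = (coord2 v <= kermx code_mx^T)%MS.
Proof.
rewrite sub_kermx; apply/tdualP/eqP => [H | H u uD].
  apply/rowP => j; rewrite !mxE -[RHS](H (enum_val j)) ?enum_valP // symp_coord2.
  by apply: eq_bigr => k _; rewrite !mxE mulrC.
move/rowP/(_ (enum_rank_in D0 u)): H; rewrite !mxE symp_coord2 => H.
by rewrite -[RHS]H; apply: eq_bigr => k _; rewrite !mxE enum_rankK_in // mulrC.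
Qed.

Lemma coord2_swap_rowg : coord2_swap @: D = rowg code_mx.
Proof.
apply/setP => y; rewrite mem_rowg; apply/imsetP/idP => [[u uD ->] | ].
  rewrite -(enum_rankK_in D0 uD).
  by rewrite -(rowK (fun j => coord2_swap (enum_val j))) row_sub.
case/submxP => w ->; rewrite mulmx_sum_row.
suff: \sum_i w 0 i *: row i code_mx \in coord2_swap @: D by case/imsetP => u; exists u.
have im0 : 0 \in coord2_swap @: D by rewrite -coord2_swap0 imset_f.
apply: (big_ind (fun x => x \in coord2_swap @: D)) => // [y1 y2 | i _].
  case/imsetP => a aD -> /imsetP [b bD ->].
  by rewrite -coord2_swap_is_additive imset_f //; case: addD => _; apply.
case: (F2_cases (w 0 i)) => ->; first by rewrite scale0r.
by rewrite scale1r rowK imset_f // enum_valP.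
Qed.

Lemma coord2_tdual_rowg : coord2 @: tdual D = rowg (kermx code_mx^T).
Proof.
apply/setP => y; rewrite mem_rowg; apply/imsetP/idP => [[u uD ->] | yk].
  by rewrite -tdual_kermx.
by exists (of_coord2 y); rewrite ?of_coord2K // tdual_kermx of_coord2K.
Qed.

Lemma card_tdual : (#|D| * #|tdual D| = 2 ^ (n + n))%N.
Proof.
rewrite -(card_imset _ coord2_swap_inj) -(card_imset _ (can_inj coord2K)).
rewrite coord2_swap_rowg coord2_tdual_rowg !card_rowg card_Fp //.
by rewrite mxrank_ker mxrank_tr -expnD subnKC // rank_leq_col.
Qed.

End TraceDualCard.

(** * Greedy construction of the chain *)

Section GreedyChain.
Variable n : nat.
Local Notation V := 'rV[F4]_n.
Implicit Types (X Y B : {set V}) (g v : V).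

Definition adjoin X g := X :|: [set g + x | x in X].

Lemma subset_adjoin X g : X \subset adjoin X g.
Proof. exact: subsetUl. Qed.

Lemma additive_adjoin X g : additive_code X -> additive_code (adjoin X g).
Proof.
case=> X0 XD; split; first by rewrite inE X0.
move=> u v; rewrite !inE => /orP [uX | /imsetP [x xX ->]] /orP [vX | /imsetP [y yX ->]].
- by rewrite XD.
- by apply/orP; right; apply/imsetP; exists (u + y); rewrite ?XD // addrCA.
- by apply/orP; right; apply/imsetP; exists (x + v); rewrite ?XD // addrA.
- by rewrite (addrC g x) addrA rV_F4_addKr XD.
Qed.

Lemma card_adjoin X g : additive_code X -> g \notin X -> #|adjoin X g| = (2 * #|X|)%N.
Proof.
case=> X0 XD gX; rewrite cardsU card_imset; last exact: addrI.
suff -> : X :&: [set g + x | x in X] = set0 by rewrite cards0 subn0 mul2n addnn.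
apply/setP => z; rewrite !inE; apply/negP => /andP [zX /imsetP [x xX zE]].
by move: gX; rewrite -(rV_F4_addKr g x) -zE XD.
Qed.

Lemma additive_tdual X : additive_code (tdual X).
Proof.
split; first by apply/tdualP => u _; rewrite symp0r.
move=> u v /tdualP Hu /tdualP Hv; apply/tdualP => w wX.
by rewrite sympDr Hu // Hv // addr0.
Qed.

Lemma tdualS X Y : X \subset Y -> tdual Y \subset tdual X.
Proof.
move=> XY; apply/subsetP => v /tdualP H; apply/tdualP => u uX.
exact/H/(subsetP XY).
Qed.

Lemma self_orthogonal_adjoin X g :
  self_orthogonal X -> g \in tdual X -> self_orthogonal (adjoin X g).
Proof.
move=> so /tdualP gX; apply/subsetP => b bE; apply/tdualP => a aE.
have Xorth x y : x \in X -> y \in X -> symp x y = 0.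
  by move=> xX yX; move/tdualP: (subsetP so y yX); apply.
move: aE bE; rewrite !inE.
move=> /orP [aX | /imsetP [x xX ->]] /orP [bX | /imsetP [y yX ->]].
- exact: Xorth.
- by rewrite sympDr gX // Xorth // addr0.
- by rewrite sympDl (sympC g b) gX // Xorth // add0r.
- by rewrite sympDl !sympDr sympxx (sympC g y) !gX // Xorth // !addr0.
Qed.

Lemma card_tdual_setD_gt0 X : additive_code X -> self_orthogonal X ->
  (#|X| < 2 ^ n)%N -> (0 < #|tdual X :\: X|)%N.
Proof.
move=> aX so Xsmall; rewrite cardsD (setIidPr so) subn_gt0.
have: (#|X| * #|X| < #|X| * #|tdual X|)%N.
  by rewrite card_tdual // expnD; apply: leq_ltn_trans (ltn_mul Xsmall Xsmall); lia.
by rewrite ltn_mul2l => /andP [].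
Qed.

(* Adjoining v to X halves the dual, so some element of the dual of X is not
   orthogonal to v. *)
Lemma exists_tdual_symp_neq0 X v : additive_code X -> v \notin X ->
  exists2 h, h \in tdual X & symp h v != 0.
Proof.
move=> aX vX.
have c1 := card_tdual aX; have c2 := card_tdual (additive_adjoin v aX).
rewrite card_adjoin // in c2.
have X0 : (0 < #|X|)%N by apply/card_gt0P; exists 0; case: aX.
have lt : (#|tdual (adjoin X v)| < #|tdual X|)%N.
  have: (0 < #|tdual (adjoin X v)|)%N.
    by apply/card_gt0P; exists 0; case: (additive_tdual (adjoin X v)).
  have: (#|X| * #|tdual X| = #|X| * (2 * #|tdual (adjoin X v)|))%N.
    by rewrite c1 -c2 mulnCA mulnA.
  by move/eqP; rewrite eqn_pmul2l // => /eqP ->; lia.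
have: ~~ (tdual X \subset tdual (adjoin X v)).
  by apply/negP => /subset_leq_card; rewrite leqNgt lt.
case/subsetPn => h hX; rewrite tdualE => /forall_inPn [a].
rewrite inE => /orP [aX0 | /imsetP [x xX ->]].
  by move/tdualP: hX => /(_ a aX0) ->.
move/tdualP: (hX) => hXorth; rewrite sympDl (hXorth x xX) addr0 sympC => hv.
by exists h.
Qed.

(* Translation by such an h maps the g orthogonal to v injectively to the g not
   orthogonal to v, within the dual of X. *)
Lemma card_orth_tdual_setD X v : additive_code X -> self_orthogonal X ->
  v \in tdual X -> v \notin X ->
  (2 * #|[set g in tdual X :\: X | symp g v == 0%R]| <= #|tdual X :\: X|)%N.
Proof.
move=> aX so vT vX; case: (exists_tdual_symp_neq0 aX vX) => h hT hv.
set T := tdual X; set Z := [set g | symp g v == 0].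
have ZT_le : (#|T :&: Z| <= #|T :\: Z|)%N.
  rewrite -(card_imset _ (addIr h)); apply/subset_leq_card/subsetP => y.
  case/imsetP => g; rewrite in_setI => /andP [gT gZ] ->.
  case: (additive_tdual X) => _ Tadd; rewrite in_setD Tadd // andbT.
  by rewrite inE in gZ; rewrite inE sympDl (eqP gZ) add0r.
have XZ : X \subset T :&: Z.
  apply/subsetP => x xX; rewrite in_setI (subsetP so) //=.
  by rewrite inE; move/tdualP: vT => ->.
have -> : [set g in T :\: X | symp g v == 0] = (T :&: Z) :\: X.
  apply/setP => g; rewrite !in_setD !in_setI [in LHS]inE in_setD [g \in Z]inE.
  by case: (g \in X); case: (g \in T); case: (symp g v == 0).
have := cardsID Z T; have := subset_leq_card XZ; move: ZT_le.
rewrite !cardsD (setIidPr XZ) (setIidPr so).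
by move: #|T :&: Z| #|T :\: Z| #|T| #|X| => a b c d; lia.
Qed.

Definition bad_count B X := #|B :&: (tdual X :\: X)|.

Lemma card_set_pred (W : {set V}) (P : pred V) :
  #|[set v in W | P v]| = (\sum_(v in W) P v)%N.
Proof.
rewrite -sum1_card [LHS]big_mkcond [RHS]big_mkcond /=; apply: eq_bigr => x _.
by rewrite inE; case: (x \in W); case: (P x).
Qed.

(* A vector v of (tdual X :\: X) remains in the new difference only when g is
   orthogonal to v, which happens for at most half of the candidates g. *)
Lemma sum_bad_count_adjoin X B : additive_code X -> self_orthogonal X ->
  (\sum_(g in tdual X :\: X) 2 * bad_count B (adjoin X g)
     <= #|tdual X :\: X| * bad_count B X)%N.
Proof.
move=> aX so; set G := tdual X :\: X; set W := B :&: G.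
have bad_le g :
    (bad_count B (adjoin X g) <= \sum_(v in W) (symp g v == 0%R : nat))%N.
  rewrite -card_set_pred /bad_count; apply/subset_leq_card/subsetP => v.
  rewrite in_setI in_setD => /and3P [vB vE vT].
  rewrite inE /W in_setI in_setD vB (subsetP (tdualS (subset_adjoin X g))) //= andbT.
  apply/andP; split; first by apply: contra vE; apply: (subsetP (subset_adjoin X g)).
  move/tdualP: vT => -> //; rewrite inE; apply/orP; right.
  by apply/imsetP; exists 0; [case: aX | rewrite addr0].
apply: (@leq_trans (\sum_(g in G) 2 * \sum_(v in W) (symp g v == 0%R : nat))).
  by apply: leq_sum => g _; rewrite leq_mul2l bad_le orbT.
rewrite -big_distrr /= exchange_big /= big_distrr /=.
rewrite /bad_count -/G -/W mulnC -sum1_card big_distrl /=; apply: leq_sum => v vW.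
have /setDP [vT vX] : v \in G by move: vW; rewrite in_setI => /andP [].
by rewrite mul1n -card_set_pred card_orth_tdual_setD.
Qed.

Lemma exists_le_average (G : {set V}) (f : V -> nat) K :
  (0 < #|G|)%N -> (\sum_(g in G) f g <= #|G| * K)%N ->
  exists2 g, g \in G & (f g <= K)%N.
Proof.
move=> G0 sumG; apply/exists_inP; apply: contraLR sumG => /exists_inPn fK.
rewrite -ltnNge (@leq_trans (#|G| * K.+1)) ?ltn_pmul2l //.
by rewrite -sum_nat_const; apply: leq_sum => g /fK; rewrite -ltnNge.
Qed.

Lemma exists_adjoin_decrease s (B : 'I_s -> {set V}) (c : 'I_s -> nat) X :
  additive_code X -> self_orthogonal X -> (#|X| < 2 ^ n)%N ->
  exists2 g, g \in tdual X :\: X &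
    (\sum_i bad_count (B i) (adjoin X g) * 2 ^ (c i).+1
       <= \sum_i bad_count (B i) X * 2 ^ c i)%N.
Proof.
move=> aX so Xsmall; set G := tdual X :\: X.
apply: exists_le_average; first exact: card_tdual_setD_gt0.
rewrite exchange_big /= big_distrr /=; apply: leq_sum => i _.
under eq_bigr do rewrite expnS mulnCA mulnA.
by rewrite -big_distrl /= mulnA leq_mul2r sum_bad_count_adjoin ?orbT.
Qed.

Definition isotropic_chain (D : nat -> {set V}) (t : nat) : Prop :=
  (forall u, (u <= t)%N ->
     [/\ additive_code (D u), self_orthogonal (D u) & #|D u| = (2 ^ u)%N]) /\
  (forall u w, (u <= w <= t)%N -> D u \subset D w).

Lemma isotropic_chain0 : isotropic_chain (fun=> [set 0 : V]) 0.
Proof.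
split=> [u | u w _]; last exact: subxx.
rewrite leqn0 => /eqP ->; split; last by rewrite cards1.
- by split=> [|a b]; rewrite ?set11 // !inE => /eqP-> /eqP->; rewrite addr0.
- by apply/subsetP => v; rewrite inE => /eqP->; apply/tdualP => ? _; rewrite symp0r.
Qed.

Lemma isotropic_chain_adjoin D t g :
  isotropic_chain D t -> g \in tdual (D t) :\: D t ->
  isotropic_chain (fun u => if (u <= t)%N then D u else adjoin (D t) g) t.+1.
Proof.
move=> [Dcode Dmono] /setDP [gT gD]; have [aD soD cD] := Dcode t (leqnn t).
split=> [u | u w /andP [uw]]; rewrite leq_eqVlt ltnS.
  case/orP => [/eqP-> | /[dup] ut ->]; last exact: Dcode.
  rewrite ltnn; split; [exact: additive_adjoin | exact: self_orthogonal_adjoin |].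
  by rewrite card_adjoin // cD expnS.
case/orP => [/eqP-> | wlt]; rewrite ?ltnn ?wlt ?(leq_trans uw wlt) ?Dmono ?uw //.
case: leqP => [ut | _]; last exact: subxx.
by apply: subset_trans (subset_adjoin _ g); apply: Dmono; rewrite ut leqnn.
Qed.

Lemma greedy_isotropic_chain s (m : 'I_s -> nat) (B : 'I_s -> {set V}) M :
  (forall i, m i <= M)%N -> (M <= n)%N ->
  (\sum_i #|B i| * 2 ^ (M - m i) < 2 ^ M)%N ->
  exists D, isotropic_chain D M /\
    forall i v, v \in tdual (D (m i)) :\: D (m i) -> v \notin B i.
Proof.
move=> mM Mn B_small.
(* Phi stays below 2 ^ M along the greedy chain, while a single word of B i
   surviving at dimension m i would contribute 2 ^ M to it. *)
pose Phi u X := (\sum_i bad_count (B i) X * 2 ^ (u + (M - m i)))%N.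
have chain t : (t <= M)%N -> exists D, isotropic_chain D t /\
    forall u, (u <= t)%N -> (Phi u (D u) < 2 ^ M)%N.
  elim: t => [_ | t IH tM].
    exists (fun=> [set 0 : V]); split=> [|u]; first exact: isotropic_chain0.
    rewrite leqn0 => /eqP->; apply: leq_ltn_trans B_small.
    by apply: leq_sum => i _; rewrite leq_mul2r subset_leq_card ?subsetIl ?orbT.
  have [D [DC DPhi]] := IH (ltnW tM); have [aD soD cD] := DC.1 t (leqnn t).
  have Dsmall : (#|D t| < 2 ^ n)%N by rewrite cD ltn_exp2l // (leq_trans tM).
  have [g gD Phi_g] :=
    exists_adjoin_decrease B (fun i => t + (M - m i))%N aD soD Dsmall.
  exists (fun u => if (u <= t)%N then D u else adjoin (D t) g).
  split=> [|u]; first exact: isotropic_chain_adjoin.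
  rewrite leq_eqVlt ltnS => /orP [/eqP-> | /[dup] ut ->]; last exact: DPhi.
  rewrite ltnn; apply: leq_ltn_trans (DPhi t (leqnn t)).
  by apply: leq_trans Phi_g; rewrite /Phi; under eq_bigr do rewrite addSn.
have [D [DC DPhi]] := chain M (leqnn M).
exists D; split=> // i v vD; apply/negP => vB.
have bad_pos : (0 < bad_count (B i) (D (m i)))%N.
  by rewrite card_gt0; apply/set0Pn; exists v; rewrite in_setI vB.
have := DPhi (m i) (mM i); rewrite /Phi (bigD1 i) //= subnKC // ltnNge.
by rewrite (leq_trans _ (leq_addr _ _)) ?leq_pmull.
Qed.

End GreedyChain.

Lemma sum_weighted_lt s (a m : 'I_s -> nat) M :
  (forall i, m i <= M)%N -> (forall i, s * a i < 2 ^ m i)%N ->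
  (\sum_i a i * 2 ^ (M - m i) < 2 ^ M)%N.
Proof.
move=> mM a_small; case: s a m mM a_small => [|s] a m mM a_small.
  by rewrite big_ord0 expn_gt0.
have term i : (s.+1 * (a i * 2 ^ (M - m i)) < 2 ^ M)%N.
  by rewrite mulnA -{2}(subnKC (mM i)) expnD ltn_pmul2r ?expn_gt0.
have: (\sum_i (s.+1 * (a i * 2 ^ (M - m i))).+1 <= \sum_(i < s.+1) 2 ^ M)%N.
  exact: leq_sum.
rewrite sum_nat_const card_ord; under eq_bigr do rewrite -addn1.
rewrite big_split /= -big_distrr sum_nat_const card_ord /=; nia.
Qed.

From mathcomp Require Import all_classical all_reals all_analysis.
Import Order.TTheory GRing.Theory Num.Theory.
Local Open Scope ring_scope.

(** * Counting low-weight words *)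

Lemma card_F4 : #|F4| = 4%N.
Proof. by rewrite card_prod card_Fp. Qed.

Lemma sum_F4_nonzero (R : pzSemiRingType) (x : R) :
  \sum_(a : F4) (if a != 0 then x else 1) = 1 + x *+ 3.
Proof.
rewrite (bigD1 (0 : F4)) //=; congr (_ + _).
rewrite (eq_bigr (fun=> x)) => [|a /negbTE -> //].
by rewrite sumr_const cardC1 card_F4.
Qed.

Lemma sum_expr_wt (R : comPzSemiRingType) n (x : R) :
  \sum_(v : 'rV[F4]_n) x ^+ wt v = (1 + x *+ 3) ^+ n.
Proof.
have wtE v : x ^+ wt v = \prod_i (if v 0 i != 0 then x else 1).
  by rewrite /wt -prodr_const big_mkcond /=; apply: eq_bigr => i _; rewrite inE.
under eq_bigr do rewrite wtE.
have -> : (1 + x *+ 3) ^+ n = \prod_(i < n) (1 + x *+ 3).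
  by rewrite prodr_const card_ord.
under [in RHS]eq_bigr do rewrite -(sum_F4_nonzero x).
rewrite bigA_distr_bigA /= (reindex (fun f : {ffun 'I_n -> F4} => \row_i f i)) /=.
  by apply: eq_bigr => f _; apply: eq_bigr => i _; rewrite mxE.
exists (fun v : 'rV[F4]_n => [ffun i => v 0 i]) => f _.
  by apply/ffunP => i; rewrite ffunE mxE.
by apply/rowP => i; rewrite !mxE ffunE.
Qed.

(* Chernoff: since x <= 1, a word of weight < rho has x ^ wt v >= x ^ rho. *)
Lemma card_low_weight_le (R : realType) n (x rho : R) : 0 < x -> x <= 1 ->
  #|[set v : 'rV[F4]_n | (wt v)%:R < rho]|%:R
    <= expR (- (rho * ln x)) * (1 + x *+ 3) ^+ n.
Proof.
move=> x0 x1; set S := [set v : 'rV[F4]_n | _].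
rewrite -sum_expr_wt mulr_sumr -sumr_const [X in _ <= X](bigID (mem S)) /=.
apply: ler_wpDr.
  by apply: sumr_ge0 => v _; rewrite mulr_ge0 ?expR_ge0 ?exprn_ge0 ?ltW.
apply: ler_sum => v; rewrite inE => vS.
rewrite -[x ^+ _]lnK ?posrE ?exprn_gt0 // lnXn // -expRD.
apply: le_trans (expR_ge1Dx _); rewrite lerDl.
have := ln_le0 x1; nra.
Qed.

Lemma ln4E (R : realType) : ln (4 : R) = ln 2 + ln 2.
Proof. by rewrite -lnM ?posrE //; congr ln; lra. Qed.

Lemma H4_three_quarters (R : realType) : H4 (3 / 4 : R) = 1.
Proof.
have l2 : 0 < ln (2 : R) by apply: ln_gt0; lra.
rewrite /H4 /log4.
have -> : 3 / 4 / 3 = 4^-1 :> R by field.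
have -> : 1 - 3 / 4 = 4^-1 :> R by field.
by rewrite lnV ?posrE // ln4E; field; lra.
Qed.

Lemma ln4_H4 (R : realType) (d : R) : 0 < d < 1 ->
  ln 4 * H4 d = - d * ln (d / (3 * (1 - d))) - ln (1 - d).
Proof.
move=> /andP [d0 d1].
have l2 : 0 < ln (2 : R) by apply: ln_gt0; lra.
have l4 : ln (4 : R) != 0 by rewrite ln4E lt0r_neq0 ?addr_gt0.
have d1' : 0 < 1 - d by lra.
have lnD3 : ln (d / 3) = ln d - ln 3 by rewrite lnM ?lnV ?posrE ?invr_gt0.
have lnDx : ln (d / (3 * (1 - d))) = ln d - ln 3 - ln (1 - d).
  by rewrite lnM ?lnV ?posrE ?invr_gt0 ?mulr_gt0 // lnM ?posrE //; lra.
by rewrite /H4 /log4 lnD3 lnDx; field.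
Qed.

(* x = d / (3 (1 - d)) minimises the Chernoff exponent, which then becomes
   the entropy. *)
Lemma card_low_weight_entropy (R : realType) n (d eps : R) : 0 < d < 3 / 4 ->
  #|[set v : 'rV[F4]_n | (wt v)%:R < (d - eps) * n%:R]|%:R
    <= expR (n%:R * (ln 4 * H4 d + eps * ln (d / (3 * (1 - d))))).
Proof.
move=> /andP [d0 d34]; set x := d / (3 * (1 - d)).
have d1 : 0 < 1 - d by lra.
have x0 : 0 < x by rewrite divr_gt0 ?mulr_gt0.
have x1 : x <= 1 by rewrite ler_pdivrMr ?mulr_gt0 //; lra.
apply: le_trans (card_low_weight_le n _ x0 x1) _.
have -> : 1 + x *+ 3 = (1 - d)^-1 by rewrite /x; field; lra.
rewrite -[(1 - d)^-1]lnK ?posrE ?invr_gt0 // -expRM_natl -expRD lnV ?posrE //.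
rewrite ln4_H4; last by apply/andP; split; lra.
have -> : - ((d - eps) * n%:R * ln x) + n%:R * - ln (1 - d)
          = n%:R * (- d * ln x - ln (1 - d) + eps * ln x) by ring.
by [].
Qed.

Lemma card_low_weight_lt (R : realType) (s n k : nat) (r d eps : R) :
  (0 < s)%N -> 0 < r -> r < 1 -> 0 < eps -> 0 < d <= 3 / 4 -> H4 d = (1 - r) / 2 ->
  r * n%:R = k%:R -> ln s%:R / (eps * - ln (d / (3 * (1 - d)))) < n%:R ->
  (s * #|[set v : 'rV[F4]_n | ((wt v)%:R < (d - eps) * n%:R)%R]| < 2 ^ (n - k))%N.
Proof.
move=> s0 r0 r1 e0 /andP [d0 d34] Hd rk n_large.
have d_lt : d < 3 / 4.
  rewrite lt_neqAle d34 andbT; apply/eqP => d_eq.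
  by move: Hd; rewrite d_eq H4_three_quarters; lra.
set x := d / (3 * (1 - d)) in n_large *.
have x0 : 0 < x by rewrite divr_gt0 ?mulr_gt0 //; lra.
have lnx : ln x < 0 by rewrite ln_lt0 // x0 ltr_pdivrMr ?mulr_gt0 //; lra.
have kn : (k <= n)%N by rewrite -(ler_nat R) -rk; have := ler0n R n; nra.
have lns : ln s%:R < n%:R * (eps * - ln x).
  by rewrite -ltr_pdivrMr // mulr_gt0 // oppr_gt0.
rewrite -(ltr_nat R) natrM natrX -[2 : R]lnK ?posrE // -expRM_natl natrB // -rk.
rewrite -[s%:R]lnK ?posrE ?ltr0n //.
apply: le_lt_trans (ler_wpM2l (ltW (expR_gt0 _)) (card_low_weight_entropy n eps _)) _.
  by rewrite d0.
rewrite -expRD ltr_expR ln4E Hd -/x.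
have -> : n%:R * ((ln 2 + ln 2) * ((1 - r) / 2) + eps * ln x)
          = (n%:R - r * n%:R) * ln 2 - n%:R * (eps * - ln x) by field.
lra.
Qed.

(* Beyond this length the slack eps n in the weight absorbs the factor s. *)
Definition gv_threshold (R : realType) (s : nat) (r eps : R) : nat :=
  let d := H4inv ((1 - r) / 2) in
  (Num.truncn (ln s%:R / (eps * - ln (d / (3 * (1 - d)))))).+1.

(* There is no need to show that (1 - r) / 2 lies in the range of H4: if it
   did not, H4inv would return the default value 0 and no word would have
   weight below (0 - eps) n. *)
Lemma card_low_weight_gv (R : realType) (s n k : nat) (r eps : R) :
  (0 < s)%N -> 0 < r -> r < 1 -> 0 < eps -> r * n%:R = k%:R ->
  (gv_threshold s r eps <= n)%N ->
  (s * #|[set v : 'rV[F4]_n | ((wt v)%:R < (H4inv ((1 - r) / 2) - eps) * n%:R)%R]|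
     < 2 ^ (n - k))%N.
Proof.
move=> s0 r0 r1 e0 rk n_large.
have [ex | nex] := pselect (exists d : R, 0 < d <= 3 / 4 /\ H4 d = (1 - r) / 2).
  have [d_range Hd] := xgetPex 0 ex.
  apply: (@card_low_weight_lt R s n k r) => //.
  by apply: lt_le_trans (truncnS_gt _) _; rewrite ler_nat.
have -> : H4inv ((1 - r) / 2) = 0 :> R by apply: xgetPN => d Pd; apply: nex; exists d.
rewrite (_ : #|_| = 0%N) ?muln0 ?expn_gt0 //; apply: eq_card0 => v.
rewrite !inE; apply/negbTE; rewrite -leNgt (le_trans _ (ler0n _ _)) //.
by rewrite sub0r mulNr oppr_le0 mulr_ge0 // ltW.
Qed.

Theorem lemma1 (R : realType) (s : nat) (r : 'I_s -> R) (eps : R) :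
  (0 < s)%N ->
  (forall i, 0 < r i /\ r i < 1) ->
  (forall i j : 'I_s, (i < j)%N -> r i < r j) ->
  0 < eps ->
  exists n0 : nat, forall n : nat, (n0 <= n)%N ->
    forall k : 'I_s -> nat, (forall i, r i * n%:R = (k i)%:R) ->
    exists C : 'I_s -> {set 'rV[F4]_n},
      (forall i, additive_code (C i) /\ self_orthogonal (C i)) /\
      (forall i j : 'I_s, (i <= j)%N -> C j \subset C i) /\
      (forall i, #|C i| = (2 ^ (n - k i))%N) /\
      (forall i v, v \in tdual (C i) :\: C i ->
         (H4inv ((1 - r i) / 2) - eps) * n%:R <= (wt v)%:R).
Proof.
move=> s_gt0 r_range r_incr eps_gt0.
exists (\max_i gv_threshold s (r i) eps) => n n_large k rk.
pose B i := [set v : 'rV[F4]_n | (wt v)%:R < (H4inv ((1 - r i) / 2) - eps) * n%:R].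
pose M := (\max_i (n - k i))%N.
have mM i : (n - k i <= M)%N by apply: (leq_bigmax i).
have B_small i : (s * #|B i| < 2 ^ (n - k i))%N.
  have [r0 r1] := r_range i.
  by apply: card_low_weight_gv => //; apply: leq_trans (leq_bigmax i) n_large.
have Mn : (M <= n)%N by apply/bigmax_leqP => i _; apply: leq_subr.
have [D [[Dcode Dmono] D_good]] :=
  greedy_isotropic_chain mM Mn (sum_weighted_lt mM B_small).
exists (fun i => D (n - k i)%N); split; [|split; [|split]].
- by move=> i; have [] := Dcode _ (mM i).
- move=> i j ij; apply: Dmono; rewrite mM andbT; apply: leq_sub2l.
  rewrite -(ler_nat R) -!rk ler_wpM2r //; move: ij; rewrite leq_eqVlt.
  by case/orP => [/eqP/val_inj-> // | /r_incr/ltW].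
- by move=> i; have [] := Dcode _ (mM i).
- by move=> i v /(D_good i v); rewrite inE -leNgt.
Qed.
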